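(* Let $T:l_\infty\to l_\infty$ be a continuous positive linear map with adjoint $T^*$. Then the set $\Delta(T^* )=\{p\in\Delta: p\text{ is an eigenvector of }T^*\}$ is nonempty and weak$^\star$-closed.
   Context: $l_\infty$: real bounded sequences indexed by $\mathbb N$ with sup norm. $ba(\mathbb N)$: norm dual of $l_\infty$ (bounded finitely additive signed measures on $2^{\mathbb N}$), pairing $\langle x,\mu\rangle$, weak$^\star$ topology. The adjoint $T^*:ba(\mathbb N)\to ba(\mathbb N)$ is defined by $\langle x,T^*(\mu)\rangle=\langle T(x),\mu\rangle$ for all $x,\mu$. $\Delta$ is the set of finitely additive probability measures on $2^{\mathbb N}$, i.e. $\mu\in ba(\mathbb N)$ with $\mu\ge0$ and $\mu(\mathbb N)=1$. An eigenvector of $T^*$ is a nonzero $\mu\in ba(\mathbb N)$ such that $T^*(\mu)=\lambda\mu$ for some $\lambda\in\mathbb R$. *)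

From Stdlib Require Import Reals Lra List.
Open Scope R_scope.

Definition bounded (x : nat -> R) : Prop := exists M, forall n, Rabs (x n) <= M.

Record linf := mk_linf { lv :> nat -> R; lv_bounded : bounded lv }.

Lemma lin_comb_bounded (a b : R) (x y : linf) :
  bounded (fun n => a * x n + b * y n).
Proof.
  destruct (lv_bounded x) as [Mx Hx]; destruct (lv_bounded y) as [My Hy].
  exists (Rabs a * Mx + Rabs b * My); intro n.
  eapply Rle_trans; [apply Rabs_triang|].
  rewrite !Rabs_mult.
  apply Rplus_le_compat; apply Rmult_le_compat_l; auto using Rabs_pos.
Qed.

Definition lin_comb (a b : R) (x y : linf) : linf :=
  mk_linf (fun n => a * x n + b * y n) (lin_comb_bounded a b x y).

Lemma one_bounded : bounded (fun _ => 1).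
Proof. exists 1; intro n; rewrite Rabs_R1; lra. Qed.

Definition linf_one : linf := mk_linf (fun _ => 1) one_bounded.

Definition dist_lt (x y : linf) (r : R) : Prop :=
  exists s, s < r /\ forall n, Rabs (x n - y n) <= s.

Definition nonneg (x : linf) : Prop := forall n, 0 <= x n.

Definition op_linear (T : linf -> linf) : Prop :=
  forall a b x y n, T (lin_comb a b x y) n = a * T x n + b * T y n.

Definition op_continuous (T : linf -> linf) : Prop :=
  forall x eps, 0 < eps -> exists delta, 0 < delta /\
    forall y, dist_lt x y delta -> dist_lt (T x) (T y) eps.

Definition op_positive (T : linf -> linf) : Prop :=
  forall x, nonneg x -> nonneg (T x).

(* ba(N) = norm dual of l_infty: continuous linear functionals *)
Definition is_ba (mu : linf -> R) : Prop :=
  (forall a b x y, mu (lin_comb a b x y) = a * mu x + b * mu y) /\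
  (forall x eps, 0 < eps -> exists delta, 0 < delta /\
    forall y, dist_lt x y delta -> Rabs (mu x - mu y) < eps).

Definition adjoint (T : linf -> linf) (mu : linf -> R) : linf -> R :=
  fun x => mu (T x).

Definition eigenvector_of_adjoint (T : linf -> linf) (mu : linf -> R) : Prop :=
  is_ba mu /\ (exists x, mu x <> 0) /\
  exists lam : R, forall x, adjoint T mu x = lam * mu x.

(* Delta: finitely additive probability measures, i.e. positive functionals
   with <1_N, mu> = 1 *)
Definition in_Delta (mu : linf -> R) : Prop :=
  is_ba mu /\ (forall x, nonneg x -> 0 <= mu x) /\ mu linf_one = 1.

Definition Delta_T (T : linf -> linf) (mu : linf -> R) : Prop :=
  in_Delta mu /\ eigenvector_of_adjoint T mu.

(* weak* closedness of a subset S of ba(N): its complement is weak*-open,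
   i.e. each point outside S has a basic weak* neighbourhood missing S *)
Definition weak_star_closed (S : (linf -> R) -> Prop) : Prop :=
  forall mu, is_ba mu -> ~ S mu ->
    exists (xs : list linf) (eps : R), 0 < eps /\
      forall nu, is_ba nu ->
        (forall x, In x xs -> Rabs (nu x - mu x) < eps) -> ~ S nu.

(* Let l0 be the infimum of the lam for which some w >= 0 satisfies
   T w <= lam w - e for an e > 0.  A minimum principle shows that at l0 no x of
   any sign satisfies T x <= l0 x - e.  Hence the functional a + (T w - l0 w) |-> a
   is well defined on its subspace and dominated by sup; its Hahn-Banach
   extension dominated by sup is a positive functional mu with mu 1 = 1 and
   mu (T x) = l0 mu x.  Closedness is elementary: membership in the set is cut
   out by mu 1 = 1, mu x >= 0 for x >= 0 and mu (T x) = mu (T 1) mu x, each a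
   condition on finitely many evaluations. *)

From Pilot Require Import Defs.
From Stdlib Require Import Reals List Lra Classical ClassicalEpsilon FunctionalExtensionality.
From mathcomp Require classical_sets.
Open Scope R_scope.

Definition lc (a b : R) (u v : nat -> R) : nat -> R := fun n => a * u n + b * v n.

Definition zero_seq : nat -> R := fun _ => 0.

Ltac seq_ext := apply functional_extensionality; intro; unfold lc, zero_seq; ring.

(* Partial linear functionals on sequences are handled through their graphs:
   then the union of a chain of extensions is again a graph, and single-valuedness
   follows from domination by sup (lemma graph_functional). *)
Notation graph := ((nat -> R) * R -> Prop).

Record sup_dominated (S : graph) : Prop := {
  graph_zero : S (zero_seq, 0);
  graph_lc : forall a b u v x y, S (u, x) -> S (v, y) -> S (lc a b u v, a * x + b * y);
  graph_le_sup : forall u x s, S (u, x) -> (forall n, u n <= s) -> x <= s }.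

Arguments graph_zero {S}.
Arguments graph_lc {S}.
Arguments graph_le_sup {S}.

Lemma graph_le S u v x y s : sup_dominated S -> S (u, x) -> S (v, y) ->
  (forall n, u n - v n <= s) -> x - y <= s.
Proof.
  intros HS Hu Hv Hs.
  assert (H : 1 * x + -1 * y <= s).
  { apply (graph_le_sup HS (lc 1 (-1) u v)); [now apply graph_lc|].
    intro n; unfold lc; specialize (Hs n); lra. }
  lra.
Qed.

Lemma graph_functional S u x y : sup_dominated S -> S (u, x) -> S (u, y) -> x = y.
Proof.
  intros HS Hx Hy.
  assert (x - y <= 0) by (apply (graph_le S u u); auto; intro n; lra).
  assert (y - x <= 0) by (apply (graph_le S u u); auto; intro n; lra).
  lra.
Qed.

Lemma graph_sandwich S y d1 x1 s1 d2 x2 s2 : sup_dominated S -> S (d1, x1) -> S (d2, x2) ->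
  (forall n, d1 n - y n <= s1) -> (forall n, d2 n + y n <= s2) -> x1 - s1 <= s2 - x2.
Proof.
  intros HS H1 H2 Hs1 Hs2.
  assert (H : 1 * x1 + 1 * x2 <= s1 + s2).
  { apply (graph_le_sup HS (lc 1 1 d1 d2)); [now apply graph_lc|].
    intro n; unfold lc; specialize (Hs1 n); specialize (Hs2 n); lra. }
  lra.
Qed.

Lemma sandwich_value_exists S y : sup_dominated S -> Defs.bounded y ->
  exists c,
    (forall d x s, S (d, x) -> (forall n, d n - y n <= s) -> x - s <= c) /\
    (forall d x s, S (d, x) -> (forall n, d n + y n <= s) -> c <= s - x).
Proof.
  intros HS [My HMy].
  set (L := fun l => exists d x s, S (d, x) /\ (forall n, d n - y n <= s) /\ l = x - s).
  assert (L_bound : bound L).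
  { exists My. intros l (d & x & s & Hd & Hs & ->).
    assert (x - s <= My - 0); [|lra].
    apply (graph_sandwich S y d x s zero_seq 0 My HS Hd (graph_zero HS) Hs).
    intro n; unfold zero_seq; specialize (HMy n); pose proof (Rle_abs (y n)); lra. }
  assert (L_inhabited : exists l, L l).
  { exists (0 - My), zero_seq, 0, My. split; [exact (graph_zero HS)|split; [|reflexivity]].
    intro n; unfold zero_seq; specialize (HMy n).
    pose proof (Rle_abs (- y n)); rewrite Rabs_Ropp in *; lra. }
  destruct (completeness L L_bound L_inhabited) as [c [Hub Hlub]].
  exists c. split.
  - intros d x s Hd Hs. apply Hub. now exists d, x, s.
  - intros d x s Hd Hs. apply Hlub. intros l (d' & x' & s' & Hd' & Hs' & ->).
    exact (graph_sandwich S y d' x' s' d x s HS Hd' Hd Hs' Hs).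
Qed.

Definition extension_bound (S : graph) (y : nat -> R) (c : R) : Prop :=
  forall d x t s, S (d, x) -> (forall n, d n + t * y n <= s) -> x + t * c <= s.

Lemma extension_bound_exists S y : sup_dominated S -> Defs.bounded y ->
  exists c, extension_bound S y c.
Proof.
  intros HS Hy.
  destruct (sandwich_value_exists S y HS Hy) as [c [lower upper]].
  exists c. intros d x t s Hd Hs.
  (* divide [d + t y <= s] by [|t|] to meet one of the two bounds on [c] *)
  destruct (Rtotal_order t 0) as [Hneg|[->|Hpos]].
  - set (r := / - t).
    assert (Hr : 0 < r) by (apply Rinv_0_lt_compat; lra).
    assert (H := lower (lc r 0 d d) (r * x + 0 * x) (r * s)
                   (graph_lc HS r 0 d d x x Hd Hd)).
    assert (H' : r * x + 0 * x - r * s <= c).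
    { apply H. intro n. unfold lc.
      assert (Hs' : r * (d n + t * y n) <= r * s)
        by (apply Rmult_le_compat_l; [lra|apply Hs]).
      replace (r * (d n + t * y n)) with (r * d n + 0 * d n - y n) in Hs'
        by (unfold r; field; lra).
      exact Hs'. }
    apply Rmult_le_compat_l with (r := - t) in H'; [|lra].
    replace (- t * (r * x + 0 * x - r * s)) with (x - s) in H' by (unfold r; field; lra).
    lra.
  - assert (H := graph_le_sup HS d x s Hd). assert (x <= s); [|lra].
    apply H. intro n. specialize (Hs n). lra.
  - set (r := / t).
    assert (Hr : 0 < r) by (apply Rinv_0_lt_compat; lra).
    assert (H := upper (lc r 0 d d) (r * x + 0 * x) (r * s)
                   (graph_lc HS r 0 d d x x Hd Hd)).
    assert (H' : c <= r * s - (r * x + 0 * x)).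
    { apply H. intro n. unfold lc.
      assert (Hs' : r * (d n + t * y n) <= r * s)
        by (apply Rmult_le_compat_l; [lra|apply Hs]).
      replace (r * (d n + t * y n)) with (r * d n + 0 * d n + y n) in Hs'
        by (unfold r; field; lra).
      exact Hs'. }
    apply Rmult_le_compat_l with (r := t) in H'; [|lra].
    replace (t * (r * s - (r * x + 0 * x))) with (s - x) in H' by (unfold r; field; lra).
    lra.
Qed.

Definition one_step_extension (S : graph) (y : nat -> R) (c : R) : graph :=
  fun p => exists d x t, S (d, x) /\ p = (lc 1 t d y, x + t * c).

Lemma one_step_extension_dominated S y c : sup_dominated S -> extension_bound S y c ->
  sup_dominated (one_step_extension S y c).
Proof.
  intros HS Hc. split.
  - exists zero_seq, 0, 0. split; [apply HS|]. f_equal; [seq_ext|ring].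
  - intros a b u v x x' (d1 & x1 & t1 & H1 & E1) (d2 & x2 & t2 & H2 & E2).
    injection E1 as -> ->. injection E2 as -> ->.
    exists (lc a b d1 d2), (a * x1 + b * x2), (a * t1 + b * t2).
    split; [now apply graph_lc|]. f_equal; [seq_ext|ring].
  - intros u x s (d & x0 & t & Hd & E) Hs. injection E as -> ->.
    apply (Hc d x0 t s Hd). intro n. specialize (Hs n). unfold lc in Hs. lra.
Qed.

Lemma one_step_extension_sub S y c p : S p -> one_step_extension S y c p.
Proof.
  destruct p as [u x]. intro H. exists u, x, 0. split; auto. f_equal; [seq_ext|ring].
Qed.

Lemma one_step_extension_new S y c : sup_dominated S -> one_step_extension S y c (y, c).
Proof.
  intro HS. exists zero_seq, 0, 1. split; [apply HS|]. f_equal; [seq_ext|ring].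
Qed.

Section ChainUnion.
Variables (S0 : graph) (F : graph -> Prop).
Hypothesis S0_dominated : sup_dominated S0.
Hypothesis F_dominated : forall X, F X -> sup_dominated (fun p => S0 p \/ X p).
Hypothesis F_chain : forall X Y, F X -> F Y -> (forall p, X p -> Y p) \/ (forall p, Y p -> X p).

Let U : graph := fun p => S0 p \/ exists2 X, F X & X p.

Let member_sub X : F X -> forall p, S0 p \/ X p -> U p.
Proof. intros FX p [H|H]; [left|right; exists X]; auto. Qed.

Lemma chain_union_common p1 p2 : U p1 -> U p2 ->
  exists G : graph, sup_dominated G /\ (forall p, G p -> U p) /\ G p1 /\ G p2.
Proof.
  assert (join : forall X, F X -> (S0 p1 \/ X p1) -> (S0 p2 \/ X p2) ->
            exists G : graph, sup_dominated G /\ (forall p, G p -> U p) /\ G p1 /\ G p2)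
    by (intros X FX H1 H2; exists (fun p => S0 p \/ X p);
        split; [auto|split; [exact (member_sub X FX)|split; assumption]]).
  intros [H1|[X1 F1 H1]] [H2|[X2 F2 H2]].
  - exists S0. split; [|split; [|split]]; auto. intros p Hp. now left.
  - apply (join X2); auto.
  - apply (join X1); auto.
  - destruct (F_chain X1 X2 F1 F2) as [H|H]; [apply (join X2)|apply (join X1)]; auto.
Qed.

Lemma chain_union_dominated : sup_dominated U.
Proof.
  split.
  - left. exact (graph_zero S0_dominated).
  - intros a b u v x y Hu Hv.
    destruct (chain_union_common _ _ Hu Hv) as (G & HG & GU & Gu & Gv).
    apply GU, (graph_lc HG); auto.
  - intros u x s Hu.
    destruct (chain_union_common _ _ Hu Hu) as (G & HG & _ & Gu & _).
    exact (graph_le_sup HG u x s Gu).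
Qed.
End ChainUnion.

Lemma sup_dominated_absorb (S0 G : graph) : (forall p, S0 p -> G p) -> sup_dominated G ->
  sup_dominated (fun p => S0 p \/ G p).
Proof.
  intros Hsub HG. split.
  - right. exact (graph_zero HG).
  - intros a b u v x y [Hu|Hu] [Hv|Hv]; right; apply (graph_lc HG); auto.
  - intros u x s [Hu|Hu]; apply (graph_le_sup HG); auto.
Qed.

Lemma sup_dominated_total_extension (S0 : graph) : sup_dominated S0 ->
  exists M : graph, sup_dominated M /\ (forall p, S0 p -> M p) /\
    forall y, Defs.bounded y -> exists v, M (y, v).
Proof.
  intro H0.
  destruct (classical_sets.Zorn_bigcup (P := fun G : graph => sup_dominated (fun p => S0 p \/ G p)))
    as [A [HA Amax]].
  { intros F HF Ftot. apply chain_union_dominated; auto. }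
  exists (fun p => S0 p \/ A p). split; [exact HA|split; [now left|]].
  intros y yb. apply NNPP. intro Hy.
  destruct (extension_bound_exists _ y HA yb) as [c Hc].
  set (E := one_step_extension (fun p => S0 p \/ A p) y c).
  apply (Amax E).
  - split.
    + intros p Ap. apply one_step_extension_sub. now right.
    + intro EA. apply Hy. exists c. right. apply EA, one_step_extension_new, HA.
  - apply sup_dominated_absorb.
    + intros p Hp. apply one_step_extension_sub. now left.
    + apply one_step_extension_dominated; assumption.
Qed.

Lemma linf_bound (x : linf) : exists M, 0 < M /\ forall n, Rabs (x n) <= M.
Proof.
  destruct (lv_bounded x) as [M HM]. exists (Rabs M + 1). split.
  - pose proof (Rabs_pos M); lra.
  - intro n. pose proof (HM n). pose proof (Rle_abs M). lra.
Qed.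

Definition strict_supersolution (T : linf -> linf) (lam : R) (x : linf) : Prop :=
  exists e, 0 < e /\ forall n, T x n <= lam * x n - e.

Definition positive_supersolution (T : linf -> linf) (lam : R) : Prop :=
  exists w, Defs.nonneg w /\ strict_supersolution T lam w.

Lemma positive_supersolution_exists T : exists lam, positive_supersolution T lam.
Proof.
  destruct (linf_bound (T linf_one)) as [M [HM HMb]].
  exists (M + 1), linf_one. split; [intro n; simpl; lra|].
  exists 1. split; [lra|]. intro n. simpl. specialize (HMb n).
  pose proof (Rle_abs (T linf_one n)). lra.
Qed.

Lemma positive_supersolution_lower_bound T lam w e : op_positive T -> Defs.nonneg w ->
  0 < e -> (forall n, T w n <= lam * w n - e) -> 0 < lam /\ forall n, e / lam <= w n.
Proof.
  intros Tpos Hw He HTw.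
  assert (Hlam : 0 < lam).
  { pose proof (Tpos w Hw 0%nat). pose proof (HTw 0%nat). pose proof (Hw 0%nat).
    destruct (Rle_or_lt lam 0); [|lra].
    assert (lam * w 0%nat <= 0) by nra. lra. }
  split; [exact Hlam|]. intro n.
  pose proof (Tpos w Hw n). pose proof (HTw n).
  apply (Rmult_le_reg_l lam); auto. field_simplify; lra.
Qed.

Lemma positive_supersolution_pos T lam : op_positive T -> positive_supersolution T lam -> 0 < lam.
Proof.
  intros Tpos (w & Hw & e & He & HTw).
  exact (proj1 (positive_supersolution_lower_bound T lam w e Tpos Hw He HTw)).
Qed.

Lemma least_shift_exists (z w : nat -> R) (c : R) : Defs.bounded z -> 0 < c ->
  (forall n, c <= w n) ->
  exists m, (forall n, 0 <= z n + m * w n) /\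
    forall m', (forall n, 0 <= z n + m' * w n) -> m <= m'.
Proof.
  intros [Mz HMz] Hc Hw.
  assert (Hwpos : forall n, 0 < w n) by (intro n; specialize (Hw n); lra).
  set (E := fun r => exists n, r * w n = - z n).
  assert (E_bound : bound E).
  { exists (Rabs Mz / c). intros r [n Hr]. specialize (HMz n). specialize (Hw n).
    pose proof (Rle_abs (- z n)). rewrite Rabs_Ropp in *.
    assert (Hq : Rabs Mz / c * c = Rabs Mz) by (field; lra).
    pose proof (Rle_abs Mz). pose proof (Rabs_pos Mz).
    assert (0 <= Rabs Mz / c)
      by (unfold Rdiv; apply Rmult_le_pos; [apply Rabs_pos|left; apply Rinv_0_lt_compat; lra]).
    destruct (Rle_or_lt r 0); nra. }
  assert (E_inhabited : exists r, E r).
  { exists (- z 0%nat / w 0%nat), 0%nat. field. specialize (Hwpos 0%nat). lra. }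
  destruct (completeness E E_bound E_inhabited) as [m [Hub Hlub]].
  assert (ratio_in_E : forall n, E (- z n / w n))
    by (intro n; exists n; field; specialize (Hwpos n); lra).
  exists m. split.
  - intro n. specialize (Hub _ (ratio_in_E n)). specialize (Hwpos n).
    assert (Hq : - z n / w n * w n = - z n) by (field; lra). nra.
  - intros m' Hm'. apply Hlub. intros r [n Hr].
    specialize (Hm' n). specialize (Hwpos n). nra.
Qed.

Lemma supersolution_nonneg T lam w z : op_linear T -> op_positive T ->
  Defs.nonneg w -> strict_supersolution T lam w ->
  (forall n, T z n <= lam * z n) -> Defs.nonneg z.
Proof.
  intros Tlin Tpos Hw (e & He & HTw) HTz.
  destruct (positive_supersolution_lower_bound T lam w e Tpos Hw He HTw) as [Hlam Hwc].
  assert (Hc : 0 < e / lam) by (apply Rdiv_lt_0_compat; auto).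
  destruct (least_shift_exists z w (e / lam) (lv_bounded z) Hc Hwc) as [m [Hm Hmin]].
  destruct (linf_bound w) as [Mw [HMw HwM]].
  destruct (Rle_or_lt m 0) as [Hm0|Hm0].
  { intro n. specialize (Hm n). specialize (Hwc n). nra. }
  exfalso.
  (* [u = z + m w] is a positive supersolution with [T u <= lam u - m e], so
     [u >= m e / lam], which lets [m] be lowered by [k] *)
  set (u := lin_comb 1 m z w).
  assert (Hu : Defs.nonneg u) by (intro n; simpl; specialize (Hm n); lra).
  set (k := m * e / (lam * Mw)).
  assert (Hk : 0 < k) by (unfold k; apply Rdiv_lt_0_compat; nra).
  assert (Hlower : forall n, 0 <= z n + (m - k) * w n).
  { intro n. pose proof (Tpos u Hu n) as HTu. unfold u in HTu. rewrite Tlin in HTu.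
    pose proof (HTz n). pose proof (HTw n). specialize (Hm n).
    specialize (Hwc n). specialize (HwM n). rewrite Rabs_right in HwM by lra.
    assert (H1 : m * e / lam <= z n + m * w n).
    { apply (Rmult_le_reg_l lam); auto. field_simplify; [|lra]. nra. }
    assert (H2 : k * w n <= m * e / lam).
    { assert (k * Mw = m * e / lam) by (unfold k; field; lra). nra. }
    lra. }
  specialize (Hmin _ Hlower). lra.
Qed.

Lemma positive_supersolution_inf T : op_positive T ->
  exists l0, (forall l, positive_supersolution T l -> l0 <= l) /\
    forall eta, 0 < eta -> exists l, positive_supersolution T l /\ l < l0 + eta.
Proof.
  intro Tpos.
  set (E := fun r => positive_supersolution T (- r)).
  assert (E_bound : bound E)
    by (exists 0; intros r Hr; pose proof (positive_supersolution_pos T _ Tpos Hr); lra).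
  assert (E_inhabited : exists r, E r).
  { destruct (positive_supersolution_exists T) as [l Hl]. exists (- l).
    unfold E. now rewrite Ropp_involutive. }
  destruct (completeness E E_bound E_inhabited) as [m [Hub Hlub]].
  exists (- m). split.
  - intros l Hl. assert (E (- l)) by (unfold E; now rewrite Ropp_involutive).
    specialize (Hub _ H). lra.
  - intros eta Heta. apply NNPP. intro Hno.
    assert (is_upper_bound E (m - eta)).
    { intros r Hr. destruct (Rle_or_lt r (m - eta)) as [|Hlt]; auto.
      exfalso. apply Hno. exists (- r). split; [exact Hr|lra]. }
    specialize (Hlub _ H). lra.
Qed.

(* At the infimum [l0] of the admissible [lam], no [x] of any sign satisfies
   [T x <= l0 x - e]: by the minimum principle such an [x] would be positive,
   and then it would witness an admissible value below [l0]. *)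
Lemma critical_value_exists T : op_linear T -> op_positive T ->
  exists l0, forall x, ~ strict_supersolution T l0 x.
Proof.
  intros Tlin Tpos.
  destruct (positive_supersolution_inf T Tpos) as [l0 [Hinf Happ]].
  exists l0. intros x (e & He & Hx).
  destruct (linf_bound x) as [M [HM HxM]].
  set (d := e / (2 * M)).
  assert (Hd : 0 < d) by (unfold d; apply Rdiv_lt_0_compat; lra).
  assert (HdM : d * M = e / 2) by (unfold d; field; lra).
  assert (Habs : forall n, - M <= x n <= M).
  { intro n. specialize (HxM n). pose proof (Rle_abs (x n)).
    pose proof (Rle_abs (- x n)). rewrite Rabs_Ropp in *. lra. }
  destruct (Happ d Hd) as [l [(w & Hw & Hsw) Hl]].
  pose proof (Hinf l (ex_intro _ w (conj Hw Hsw))) as Hl0.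
  assert (Hxpos : Defs.nonneg x).
  { apply (supersolution_nonneg T l w x Tlin Tpos Hw Hsw).
    intro n. specialize (Hx n). specialize (Habs n). nra. }
  assert (Hbelow : positive_supersolution T (l0 - d)).
  { exists x. split; [exact Hxpos|]. exists (e / 2). split; [lra|]. intro n.
    specialize (Hx n). specialize (Habs n). specialize (Hxpos n). nra. }
  specialize (Hinf _ Hbelow). lra.
Qed.

Lemma Delta_T_eigenvalue T nu : Delta_T T nu -> forall x, nu (T x) = nu (T linf_one) * nu x.
Proof.
  intros [[_ [_ Hone]] [_ [_ [lam Hlam]]]] x.
  assert (lam = nu (T linf_one)) by (specialize (Hlam linf_one); unfold adjoint in Hlam; rewrite Hone in Hlam; lra).
  subst lam. exact (Hlam x).
Qed.

Lemma Delta_T_intro T mu : is_ba mu -> mu linf_one = 1 -> (forall x, Defs.nonneg x -> 0 <= mu x) ->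
  (forall x, mu (T x) = mu (T linf_one) * mu x) -> Delta_T T mu.
Proof.
  intros Hba Hone Hpos Heig.
  split; [split; [exact Hba|split; [exact Hpos|exact Hone]]|].
  split; [exact Hba|split].
  - exists linf_one. rewrite Hone. lra.
  - exists (mu (T linf_one)). exact Heig.
Qed.

Definition residual (T : linf -> linf) (l0 : R) (w : linf) : nat -> R :=
  fun n => T w n - l0 * w n.

Definition residual_graph (T : linf -> linf) (l0 : R) : graph :=
  fun p => exists a w, p = (fun n => a + residual T l0 w n, a).

Definition linf_zero : linf := lin_comb 0 0 linf_one linf_one.

Lemma residual_lin_comb T l0 a b w1 w2 n : op_linear T ->
  residual T l0 (lin_comb a b w1 w2) n = a * residual T l0 w1 n + b * residual T l0 w2 n.
Proof. intro Tlin. unfold residual. rewrite Tlin. simpl. ring. Qed.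

Lemma residual_zero T l0 n : op_linear T -> residual T l0 linf_zero n = 0.
Proof.
  intro Tlin. unfold linf_zero. rewrite residual_lin_comb by exact Tlin. ring.
Qed.

Lemma residual_graph_dominated T l0 : op_linear T ->
  (forall x, ~ strict_supersolution T l0 x) -> sup_dominated (residual_graph T l0).
Proof.
  intros Tlin Hl0. split.
  - exists 0, linf_zero. f_equal. apply functional_extensionality. intro n.
    rewrite residual_zero by exact Tlin. unfold zero_seq. ring.
  - intros a b u v x y (x1 & w1 & E1) (x2 & w2 & E2).
    injection E1 as -> ->. injection E2 as -> ->.
    exists (a * x1 + b * x2), (lin_comb a b w1 w2). f_equal.
    apply functional_extensionality. intro n.
    rewrite residual_lin_comb by exact Tlin. unfold lc. ring.
  - intros u x s (a & w & E) Hs. injection E as -> ->.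
    destruct (Rle_or_lt a s) as [|Has]; [assumption|].
    exfalso. apply (Hl0 w). exists (a - s). split; [lra|].
    intro n. specialize (Hs n). unfold residual in Hs. lra.
Qed.

Definition graph_value (M : graph) (u : nat -> R) : R :=
  epsilon (inhabits 0) (fun v => M (u, v)).

Lemma graph_value_eq M u v : sup_dominated M -> M (u, v) -> graph_value M u = v.
Proof.
  intros HM Huv. unfold graph_value.
  apply (graph_functional M u); [exact HM| |exact Huv].
  apply (epsilon_spec (inhabits 0) (fun v => M (u, v))). now exists v.
Qed.

Lemma graph_value_spec M u : (exists v, M (u, v)) -> M (u, graph_value M u).
Proof. exact (epsilon_spec (inhabits 0) (fun v => M (u, v))). Qed.

Section GraphFunctional.
Variable M : graph.
Hypothesis M_dominated : sup_dominated M.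
Hypothesis M_total : forall x : linf, exists v, M (lv x, v).

Let mu (x : linf) : R := graph_value M x.

Let mu_spec (x : linf) : M (lv x, mu x).
Proof. exact (graph_value_spec M x (M_total x)). Qed.

Lemma graph_value_lin_comb a b x y : mu (lin_comb a b x y) = a * mu x + b * mu y.
Proof.
  apply graph_value_eq; [exact M_dominated|].
  exact (graph_lc M_dominated a b _ _ _ _ (mu_spec x) (mu_spec y)).
Qed.

Lemma graph_value_is_ba : is_ba mu.
Proof.
  split; [exact graph_value_lin_comb|].
  intros x eps Heps. exists eps. split; [exact Heps|]. intros y (s & Hs & Hxy).
  apply Rabs_def1.
  - assert (mu x - mu y <= s); [|lra].
    apply (graph_le M x y); [exact M_dominated|apply mu_spec|apply mu_spec|].
    intro n. specialize (Hxy n). pose proof (Rle_abs (x n - y n)). lra.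
  - assert (mu y - mu x <= s); [|lra].
    apply (graph_le M y x); [exact M_dominated|apply mu_spec|apply mu_spec|].
    intro n. specialize (Hxy n). pose proof (Rle_abs (- (x n - y n))).
    rewrite Rabs_Ropp in *. lra.
Qed.

Lemma graph_value_nonneg x : Defs.nonneg x -> 0 <= mu x.
Proof.
  intro Hx. assert (0 - mu x <= 0); [|lra].
  apply (graph_le M zero_seq x); [exact M_dominated|exact (graph_zero M_dominated)|apply mu_spec|].
  intro n. specialize (Hx n). unfold zero_seq. lra.
Qed.

Lemma graph_value_Delta_T T l0 : op_linear T ->
  (forall p, residual_graph T l0 p -> M p) -> Delta_T T mu.
Proof.
  intros Tlin Hsub.
  assert (Hone : mu linf_one = 1).
  { apply graph_value_eq; [exact M_dominated|]. apply Hsub. exists 1, linf_zero. f_equal.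
    apply functional_extensionality. intro n. rewrite residual_zero by exact Tlin. simpl. ring. }
  assert (Heigen : forall x, mu (T x) = l0 * mu x).
  { intro x.
    assert (H0 : M (lc 1 (- l0) (T x) x, 0)).
    { apply Hsub. exists 0, x. f_equal. apply functional_extensionality. intro n.
      unfold residual, lc. ring. }
    pose proof (graph_functional M _ _ _ M_dominated H0
                  (graph_lc M_dominated 1 (- l0) _ _ _ _ (mu_spec (T x)) (mu_spec x))).
    lra. }
  apply Delta_T_intro; [exact graph_value_is_ba|exact Hone|exact graph_value_nonneg|].
  intro x. rewrite !Heigen, Hone. ring.
Qed.
End GraphFunctional.

Lemma Rabs_mult_sub_le (a b a0 b0 e : R) : Rabs (a - a0) < e -> Rabs (b - b0) < e -> e <= 1 ->
  Rabs (a * b - a0 * b0) <= e * (1 + Rabs a0 + Rabs b0).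
Proof.
  intros Ha Hb He.
  replace (a * b - a0 * b0) with ((a - a0) * (b - b0) + (a - a0) * b0 + a0 * (b - b0)) by ring.
  eapply Rle_trans; [apply Rabs_triang|].
  eapply Rle_trans; [apply Rplus_le_compat_r, Rabs_triang|].
  rewrite !Rabs_mult.
  pose proof (Rabs_pos (a - a0)). pose proof (Rabs_pos (b - b0)).
  pose proof (Rabs_pos a0). pose proof (Rabs_pos b0).
  nra.
Qed.

Definition weak_star_separated (S : (linf -> R) -> Prop) (mu : linf -> R) : Prop :=
  exists (xs : list linf) (eps : R), 0 < eps /\
    forall nu, is_ba nu -> (forall x, In x xs -> Rabs (nu x - mu x) < eps) -> ~ S nu.

Lemma separated_of_mass T mu : mu linf_one <> 1 -> weak_star_separated (Delta_T T) mu.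
Proof.
  intro H1. exists (linf_one :: nil), (Rabs (mu linf_one - 1)). split.
  - apply Rabs_pos_lt. lra.
  - intros nu _ Hnu [[_ [_ Hone]] _]. specialize (Hnu linf_one (or_introl eq_refl)).
    rewrite Hone, <- Rabs_Ropp in Hnu.
    replace (- (1 - mu linf_one)) with (mu linf_one - 1) in Hnu by ring. lra.
Qed.

Lemma separated_of_negative T mu x : Defs.nonneg x -> mu x < 0 ->
  weak_star_separated (Delta_T T) mu.
Proof.
  intros Hx Hmx. exists (x :: nil), (- mu x). split; [lra|].
  intros nu _ Hnu [[_ [Hpos _]] _]. specialize (Hnu x (or_introl eq_refl)).
  specialize (Hpos x Hx). pose proof (Rle_abs (nu x - mu x)). lra.
Qed.

Lemma separated_of_not_eigen T mu x : mu (T x) <> mu (T linf_one) * mu x ->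
  weak_star_separated (Delta_T T) mu.
Proof.
  intro Hx.
  set (d := Rabs (mu (T x) - mu (T linf_one) * mu x)).
  assert (Hd : 0 < d) by (apply Rabs_pos_lt; lra).
  set (K := 1 + Rabs (mu (T linf_one)) + Rabs (mu x)).
  assert (HK : 0 < K) by (unfold K; pose proof (Rabs_pos (mu x));
                          pose proof (Rabs_pos (mu (T linf_one))); lra).
  set (e := Rmin 1 (d / (1 + K))).
  assert (He : 0 < e) by (apply Rmin_pos; [lra|apply Rdiv_lt_0_compat; lra]).
  assert (He1 : e <= 1) by apply Rmin_l.
  assert (HeK : e * (1 + K) <= d).
  { assert (e <= d / (1 + K)) by apply Rmin_r.
    assert (d / (1 + K) * (1 + K) = d) by (field; lra). nra. }
  exists (T linf_one :: x :: T x :: nil), e. split; [exact He|].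
  intros nu _ Hnu HD.
  pose proof (Delta_T_eigenvalue T nu HD x) as Heig.
  assert (Ha := Hnu (T linf_one) ltac:(simpl; tauto)).
  assert (Hb := Hnu x ltac:(simpl; tauto)).
  assert (Hc := Hnu (T x) ltac:(simpl; tauto)).
  pose proof (Rabs_mult_sub_le _ _ _ _ _ Ha Hb He1) as Hab.
  assert (Hdd : d <= Rabs (nu (T x) - mu (T x))
                    + Rabs (nu (T linf_one) * nu x - mu (T linf_one) * mu x)).
  { unfold d. rewrite <- Rabs_Ropp with (x := nu (T x) - mu (T x)).
    eapply Rle_trans; [|apply Rabs_triang]. right. f_equal. rewrite Heig. ring. }
  fold K in Hab. lra.
Qed.

Lemma Delta_T_weak_star_closed T : weak_star_closed (Delta_T T).
Proof.
  intros mu Hba Hn.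
  destruct (Req_dec (mu linf_one) 1) as [Hone|Hone]; [|now apply separated_of_mass].
  destruct (classic (exists x, Defs.nonneg x /\ mu x < 0)) as [(x & Hx & Hmx)|Hpos].
  { now apply (separated_of_negative T mu x). }
  destruct (classic (exists x, mu (T x) <> mu (T linf_one) * mu x)) as [[x Hx]|Heig].
  { now apply (separated_of_not_eigen T mu x). }
  exfalso. apply Hn, Delta_T_intro; [exact Hba|exact Hone| |].
  - intros x Hx. apply Rnot_lt_le. intro Hlt. apply Hpos. now exists x.
  - intro x. apply NNPP. intro Hne. apply Heig. now exists x.
Qed.

Theorem lemma2 (T : linf -> linf) :
  op_linear T -> op_continuous T -> op_positive T ->
  (exists mu, Delta_T T mu) /\ weak_star_closed (Delta_T T).
Proof.
  intros Tlin _ Tpos. split; [|apply Delta_T_weak_star_closed].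
  destruct (critical_value_exists T Tlin Tpos) as [l0 Hl0].
  destruct (sup_dominated_total_extension (residual_graph T l0)
              (residual_graph_dominated T l0 Tlin Hl0)) as (M & HM & Hsub & Htot).
  exists (fun x : linf => graph_value M x).
  apply (graph_value_Delta_T M HM (fun x => Htot x (lv_bounded x)) T l0 Tlin Hsub).
Qed.
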